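(* Let $A\in\mathbb{R}^{m\times n}$ have singular value decomposition $A=U\Sigma V^\top$ (with $U\in\mathbb{R}^{m\times m}$, $V\in\mathbb{R}^{n\times n}$ orthogonal), let $r=\operatorname{rank}(A)$, and let $\lambda:=(\sigma_1^2(A),\ldots,\sigma_r^2(A),0,\ldots,0)^\top\in\mathbb{R}^m$ (the eigenvalues of $AA^\top$ in the order matching the columns of $U$). Let $1\le s\le r$ and let $\mathcal{S}$ be a random variable with $\mathcal{S}\sim\operatorname{Vol}_s(AA^\top)$. Then $$\mathbb{E}[A_{\mathcal{S}}^\dagger A_{\mathcal{S}}]=A^\top H_s A,\qquad\text{where}\quad H_s:=\frac{U\operatorname{diag}\big(e_{s-1}(\lambda_{-1}),\ldots,e_{s-1}(\lambda_{-m})\big)U^\top}{e_s(\lambda)}.$$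
   Context: $\sigma_1(A)\ge\cdots\ge\sigma_r(A)>0$ are the nonzero singular values of $A$. For $\xi\in\mathbb{R}^p$ and $1\le \ell\le p$, $e_\ell(\xi):=\sum_{1\le i_1<\cdots<i_\ell\le p}\xi_{i_1}\cdots\xi_{i_\ell}$ is the $\ell$-th elementary symmetric polynomial, and $e_0(\xi):=1$. For $i\in[m]$, $\lambda_{-i}\in\mathbb{R}^{m-1}$ is $\lambda$ with its $i$-th entry removed. For $\mathcal{S}\subseteq[m]=\{1,\dots,m\}$, $A_{\mathcal{S}}$ is the submatrix of $A$ consisting of the rows indexed by $\mathcal{S}$, and $A_{\mathcal{S}}^\dagger$ its Moore–Penrose pseudoinverse. Volume sampling: $\binom{[m]}{s}$ denotes the set of $s$-element subsets of $[m]$; a random variable $\mathcal{S}_0$ with values in $\binom{[m]}{s}$ satisfies $\mathcal{S}_0\sim\operatorname{Vol}_s(AA^\top)$ if $\mathbb{P}(\mathcal{S}_0=\mathcal{S})=\det(A_{\mathcal{S}}A_{\mathcal{S}}^\top)/\sum_{\mathcal{J}\in\binom{[m]}{s}}\det(A_{\mathcal{J}}A_{\mathcal{J}}^\top)$ for all $\mathcal{S}\in\binom{[m]}{s}$. *)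

From HB Require Import structures.
From mathcomp Require Import all_boot all_order all_algebra.
From Stdlib Require Import ClassicalEpsilon.
Set Implicit Arguments. Unset Strict Implicit. Unset Printing Implicit Defensive.
Import Order.TTheory GRing.Theory Num.Theory.
Local Open Scope ring_scope.

Definition penrose (R : realFieldType) (p q : nat)
  (A : 'M[R]_(p, q)) (X : 'M[R]_(q, p)) : Prop :=
  [/\ A *m X *m A = A, X *m A *m X = X,
      (A *m X)^T = A *m X & (X *m A)^T = X *m A].

(* The Moore--Penrose pseudoinverse (it exists and is unique; chosen by
   classical epsilon among matrices satisfying the Penrose conditions). *)
Definition pinv (R : realFieldType) (p q : nat) (A : 'M[R]_(p, q)) : 'M[R]_(q, p) :=
  epsilon (inhabits 0) (penrose A).

(* A_S : rows of A indexed by S (in increasing order). *)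
Definition rows_of (R : realFieldType) (m n : nat) (A : 'M[R]_(m, n))
  (S : {set 'I_m}) : 'M[R]_(#|S|, n) :=
  rowsub (fun i : 'I_#|S| => enum_val i) A.

Definition elem_sym (R : realFieldType) (p k : nat) (xi : 'I_p -> R) : R :=
  \sum_(I : {set 'I_p} | #|I| == k) \prod_(i in I) xi i.

Definition remove_at (R : realFieldType) (p : nat) (xi : 'I_p -> R) (i : 'I_p)
  : 'I_p.-1 -> R := fun j => xi (lift i j).

Definition vol_prob (R : realFieldType) (m n s : nat) (A : 'M[R]_(m, n))
  (S : {set 'I_m}) : R :=
  \det (rows_of A S *m (rows_of A S)^T) /
  \sum_(J : {set 'I_m} | #|J| == s) \det (rows_of A J *m (rows_of A J)^T).

Definition vol_expect_proj (R : realFieldType) (m n s : nat) (A : 'M[R]_(m, n))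
  : 'M[R]_n :=
  \sum_(S : {set 'I_m} | #|S| == s)
     vol_prob s A S *: (pinv (rows_of A S) *m rows_of A S).

(* For each s-subset S, the matrix determinant lemma gives
     det(A_S A_S^T) y (A_S^+ A_S) z^T = det(A_S (1 + z^T y) A_S^T) - det(A_S A_S^T),
   so the bilinear form of the unnormalised expectation is E_s(A (1 + z^T y) A^T)
   - E_s(A A^T), where E_s is the sum of the principal s-minors.  Since
   E_s(B C) = E_s(C B) (a Cauchy-Binet type identity), both terms can be
   computed after conjugating by the SVD: in the basis of V, with y, z rows of
   V^T, the matrix becomes Sigma Sigma^T = diag(lambda) perturbed by a multiple
   of a matrix unit, whose E_s is e_s(lambda) plus, for a diagonal unit at i,
   the correction e_{s-1}(lambda_{-i}). *)

From HB Require Import structures.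
From mathcomp Require Import all_boot all_order all_algebra fingroup perm.
From Stdlib Require Import ClassicalEpsilon.
Set Implicit Arguments. Unset Strict Implicit. Unset Printing Implicit Defensive.
Import Order.TTheory GRing.Theory Num.Theory.
Local Open Scope ring_scope.

Section PrincipalMinors.
Variable R : comNzRingType.

Definition psubmx p (S : {set 'I_p}) (M : 'M[R]_p) : 'M[R]_#|S| :=
  mxsub (fun i : 'I_#|S| => enum_val i) (fun i : 'I_#|S| => enum_val i) M.

Definition pminor_sum p s (M : 'M[R]_p) : R :=
  \sum_(S : {set 'I_p} | #|S| == s) \det (psubmx S M).

Definition ffun_minor_sum p s (M : 'M[R]_p) : R :=
  \sum_(g : {ffun 'I_s -> 'I_p}) \det (mxsub g g M).

Lemma det_mxsub_mulmx s p q (g : 'I_s -> 'I_p) (B : 'M[R]_(p, q)) (C : 'M[R]_(q, p)) :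
  \det (mxsub g g (B *m C)) = \sum_(sg : 'S_s) \sum_(f : {ffun 'I_s -> 'I_q})
     (-1) ^+ sg * \prod_i (B (g i) (f i) * C (f i) (g (sg i))).
Proof.
apply: eq_bigr => sg _; rewrite -big_distrr /=; congr (_ * _).
under eq_bigr do rewrite !mxE.
by rewrite bigA_distr_bigA.
Qed.

(* Expanding both sides gives the same sum over (sg, f, g), up to
   reindexing f by sg^-1 and the product by sg. *)
Lemma ffun_minor_sum_mulC s p q (B : 'M[R]_(p, q)) (C : 'M[R]_(q, p)) :
  ffun_minor_sum s (B *m C) = ffun_minor_sum s (C *m B).
Proof.
rewrite /ffun_minor_sum; under eq_bigr do rewrite det_mxsub_mulmx.
under [RHS]eq_bigr do rewrite det_mxsub_mulmx.
rewrite exchange_big [RHS]exchange_big /=; apply: eq_bigr => sg _.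
rewrite [RHS]exchange_big /=; apply: eq_bigr => g _.
pose h (f : {ffun 'I_s -> 'I_q}) := [ffun i => f ((sg^-1)%g i)].
have h_inj : injective h.
  by move=> f1 f2 /ffunP Ef; apply/ffunP => j; have := Ef (sg j); rewrite !ffunE permK.
rewrite [RHS](reindex_inj h_inj) /=; apply: eq_bigr => f _; congr (_ * _).
rewrite !big_split /= mulrC; congr (_ * _).
  rewrite [RHS](reindex_inj (@perm_inj _ sg)) /=.
  by apply: eq_bigr => i _; rewrite !ffunE permK.
by apply: eq_bigr => i _; rewrite !ffunE permK.
Qed.

Lemma det_mxsub_perm s k (N : 'M[R]_k) (tau : 'I_s -> 'I_k) :
  injective tau -> s = k -> \det (mxsub tau tau N) = \det N.
Proof.
move=> tau_inj esk; subst s; pose sg := perm tau_inj.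
have -> : mxsub tau tau N = perm_mx sg *m (N *m perm_mx sg^-1).
  by rewrite -col_permE -row_permE; apply/matrixP => i j; rewrite !mxE !permE.
by rewrite !det_mulmx !det_perm odd_permV mulrCA -signr_addb addbb mulr1.
Qed.

Lemma det_mxsub_ninj s p (M : 'M[R]_p) (g : 'I_s -> 'I_p) :
  ~~ injectiveb g -> \det (mxsub g g M) = 0.
Proof.
case/injectivePn => i1 [i2 Di12 Eg].
by apply: (determinant_alternate Di12) => j; rewrite !mxE Eg.
Qed.

(* Each injective g : 'I_s -> 'I_p is an ordering of its image S, and there
   are s! orderings of each S. *)
Lemma ffun_minor_sumE p s (M : 'M[R]_p) : ffun_minor_sum s M = s`!%:R * pminor_sum s M.
Proof.
rewrite /ffun_minor_sum (bigID (fun g : {ffun 'I_s -> 'I_p} => injectiveb g)) /=.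
rewrite [X in _ + X]big1 ?addr0; last by move=> g /det_mxsub_ninj.
rewrite (partition_big (fun g : {ffun 'I_s -> 'I_p} => g @: [set: 'I_s])
   (fun S => #|S| == s)) /=; last first.
  by move=> g /injectiveP g_inj; rewrite card_imset // cardsT card_ord.
rewrite /pminor_sum big_distrr /=; apply: eq_bigr => S /eqP cardS.
transitivity (\sum_(g : {ffun 'I_s -> 'I_p} | injectiveb g && (g @: [set: 'I_s] == S))
    \det (psubmx S M)).
  apply: eq_bigr => g /andP[/injectiveP g_inj /eqP gS].
  have gS' i : g i \in S by rewrite -gS imset_f ?inE.
  pose tau i := enum_rank_in (gS' i) (g i).
  have tauK i : enum_val (tau i) = g i by rewrite /tau enum_rankK_in.
  have -> : mxsub g g M = mxsub tau tau (psubmx S M).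
    by apply/matrixP => i j; rewrite !mxE !tauK.
  by apply: det_mxsub_perm => // i j Eij; apply: g_inj; rewrite -!tauK Eij.
rewrite sumr_const mulr_natl; congr (_ *+ _).
transitivity (#|S| ^_ #|'I_s|); last by rewrite card_ord cardS ffactnn.
rewrite -card_inj_ffuns_on.
apply: eq_card => f; rewrite [in LHS]unfold_in /= !inE.
case: (boolP (injectiveb f)) => [/injectiveP f_inj|]; rewrite ?andbF ?andbT //=.
rewrite eqEcard card_imset // cardsT card_ord cardS leqnn andbT.
apply/subsetP/forallP => [fS x | fS x /imsetP [y _ ->]] //.
by apply: fS; rewrite imset_f ?inE.
Qed.

Lemma det_mxsub_diag k p (f : 'I_k -> 'I_p) (d : 'rV[R]_p) :
  injective f -> \det (mxsub f f (diag_mx d)) = \prod_i d 0 (f i).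
Proof.
move=> f_inj; have -> : mxsub f f (diag_mx d) = diag_mx (\row_i d 0 (f i)).
  by apply/matrixP => i j; rewrite !mxE (inj_eq f_inj).
by rewrite det_diag; apply: eq_bigr => i _; rewrite mxE.
Qed.

(* Only the entry at (f^-1 a, f^-1 b) can be nonzero off the diagonal, so
   either the submatrix or its transpose is lower triangular. *)
Lemma det_mxsub_diag_add_delta k p (f : 'I_k -> 'I_p) (d : 'rV[R]_p) c a b :
  injective f -> a != b ->
  \det (mxsub f f (diag_mx d + c *: delta_mx a b)) = \prod_i d 0 (f i).
Proof.
move=> f_inj neq_ab; set X := mxsub _ _ _.
have XE i j : X i j = d 0 (f i) *+ (i == j) + c * ((f i == a) && (f j == b))%:R.
  by rewrite !mxE (inj_eq f_inj).
have Xii i : X i i = d 0 (f i).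
  by rewrite XE eqxx; case: eqP => [->|] /=; rewrite ?(negPf neq_ab) mulr0 addr0.
have Xoff (i j : 'I_k) : (i < j)%N || (j < i)%N ->
    X i j = c * ((f i == a) && (f j == b))%:R.
  by rewrite -neq_ltn val_eqE => /negPf neq_ij; rewrite XE neq_ij add0r.
case: (boolP [exists i, exists j, [&& f i == a, f j == b & (j < i)%N]]) => [|no_pair].
  case/existsP=> i0 /existsP[j0 /and3P[/eqP fi0 /eqP fj0 lt_ji0]].
  rewrite det_trig; first by apply: eq_bigr => i _; rewrite Xii.
  apply/is_trig_mxP => i j lt_ij; rewrite Xoff ?lt_ij //.
  case: (f i =P a) => [fi|]; case: (f j =P b) => [fj|] /=; rewrite ?mulr0 //.
  have ei : i = i0 by apply: f_inj; rewrite fi fi0.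
  have ej : j = j0 by apply: f_inj; rewrite fj fj0.
  by move: lt_ij; rewrite ei ej => /(ltn_trans lt_ji0); rewrite ltnn.
rewrite -det_tr det_trig; first by apply: eq_bigr => i _; rewrite mxE Xii.
apply/is_trig_mxP => i j lt_ij; rewrite mxE Xoff ?lt_ij ?orbT //.
case: (f j =P a) => [fj|]; case: (f i =P b) => [fi|] /=; rewrite ?mulr0 //.
by case/negP: no_pair; apply/existsP; exists j; apply/existsP; exists i; rewrite fi fj !eqxx.
Qed.

Lemma pminor_sum_diag_add_offdiag p s (d : 'rV[R]_p) c a b : a != b ->
  pminor_sum s (diag_mx d + c *: delta_mx a b) = pminor_sum s (diag_mx d).
Proof.
move=> neq_ab; apply: eq_bigr => S _.
by rewrite /psubmx det_mxsub_diag_add_delta ?det_mxsub_diag //; exact: enum_val_inj.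
Qed.

Lemma det_id_add_rank1 k (w : 'cV[R]_k) (v : 'rV[R]_k) :
  \det (1%:M + w *m v) = 1 + (v *m w) 0 0.
Proof.
pose N := block_mx 1%:M (- w) v (1%:M : 'M[R]_1).
have N_lu : N = block_mx 1%:M 0 v 1%:M *m block_mx 1%:M (- w) 0 (1%:M + v *m w).
  by rewrite mulmx_block !(mul1mx, mul0mx, mulmx0, mulmx1, addr0, add0r) mulmxN
     [1%:M + _]addrC addKr.
have N_ul : N = block_mx (1%:M + w *m v) (- w) 0 1%:M *m block_mx 1%:M 0 v 1%:M.
  by rewrite mulmx_block !(mul1mx, mul0mx, mulmx0, mulmx1, addr0, add0r) mulNmx addrK.
have := congr1 determinant N_ul.
rewrite {1}N_lu !det_mulmx !det_lblock !det_ublock !det1 !mul1r !mulr1 det_mx11 => <-.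
by rewrite !mxE.
Qed.

End PrincipalMinors.

Lemma det_add_rank1 (R : comUnitRingType) k (K : 'M[R]_k) (u : 'cV[R]_k) (v : 'rV[R]_k) :
  K \in unitmx -> \det (K + u *m v) = \det K * (1 + (v *m invmx K *m u) 0 0).
Proof.
move=> K_unit; have -> : K + u *m v = K *m (1%:M + (invmx K *m u) *m v).
  by rewrite mulmxDr mulmx1 !mulmxA mulmxV // mul1mx.
by rewrite det_mulmx det_id_add_rank1 mulmxA.
Qed.

Lemma pminor_sum_mulC (R : numDomainType) s p q (B : 'M[R]_(p, q)) (C : 'M[R]_(q, p)) :
  pminor_sum s (B *m C) = pminor_sum s (C *m B).
Proof.
have := ffun_minor_sum_mulC s B C; rewrite !ffun_minor_sumE => /mulfI; apply.
by rewrite pnatr_eq0 -lt0n fact_gt0.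
Qed.

Lemma pminor_sum_conj (R : numDomainType) p s (U X : 'M[R]_p) :
  U^T *m U = 1%:M -> pminor_sum s (U *m X *m U^T) = pminor_sum s X.
Proof. by move=> HU; rewrite pminor_sum_mulC mulmxA HU mul1mx. Qed.

Section ElementarySymmetric.
Variable R : realFieldType.

Lemma elem_sym_remove_atE p s (x : 'I_p -> R) (j : 'I_p) : (1 <= s)%N ->
  elem_sym s.-1 (remove_at x j) =
  \sum_(I : {set 'I_p} | (#|I| == s) && (j \in I)) \prod_(i in I | i != j) x i.
Proof.
case: p x j => [|p] x j; first by case: j.
case: s => // s _; rewrite /elem_sym /remove_at /=.
pose h (J : {set 'I_p}) : {set 'I_p.+1} := j |: (lift j @: J).
pose h' (I : {set 'I_p.+1}) : {set 'I_p} := [set k | lift j k \in I].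
have j_notin_lift (J : {set 'I_p}) : j \notin lift j @: J.
  by apply/imsetP => -[k _ /eqP]; rewrite (negbTE (neq_lift j k)).
have hK J : h' (h J) = J.
  apply/setP => k; rewrite !inE eq_sym (negPf (neq_lift j k)) /=.
  by rewrite mem_imset //; exact: lift_inj.
have h'K (I : {set 'I_p.+1}) : j \in I -> h (h' I) = I.
  move=> jI; apply/setP => y; rewrite !inE; case: (unliftP j y) => [k ->|->].
    by rewrite eq_sym (negPf (neq_lift j k)) /= mem_imset ?inE //; exact: lift_inj.
  by rewrite eqxx jI.
symmetry; rewrite (reindex_onto h h'); last by move=> I /andP[_ /h'K].
apply: eq_big => [J | J _].
  rewrite hK eqxx andbT /h setU11 andbT cardsU1 (j_notin_lift J) card_imset //.
  exact: lift_inj.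
rewrite -(big_imset _ (in2W (@lift_inj _ j))) /=.
apply: eq_bigl => i; rewrite /h !inE; case: eqP => [->|] /=.
  by rewrite (negPf (j_notin_lift J)).
by rewrite andbT.
Qed.

Lemma elem_sym_bump p s (x : 'I_p -> R) (j : 'I_p) c : (1 <= s)%N ->
  elem_sym s (fun i => x i + c * (i == j)%:R) =
  elem_sym s x + c * elem_sym s.-1 (remove_at x j).
Proof.
move=> s_gt0; rewrite elem_sym_remove_atE //.
have split_j (y : 'I_p -> R) : elem_sym s y =
    \sum_(I : {set 'I_p} | (#|I| == s) && (j \notin I)) \prod_(i in I) y i +
    \sum_(I : {set 'I_p} | (#|I| == s) && (j \in I)) y j * \prod_(i in I | i != j) y i.
  rewrite /elem_sym (bigID (fun I : {set 'I_p} => j \in I)) /= addrC; congr (_ + _).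
  by apply: eq_bigr => I /andP[_ jI]; rewrite (bigD1 j).
have bump_off (I : {set 'I_p}) : \prod_(i in I | i != j) (x i + c * (i == j)%:R) =
    \prod_(i in I | i != j) x i.
  by apply: eq_bigr => i /andP[_ /negPf->]; rewrite mulr0 addr0.
rewrite !split_j -addrA; congr (_ + _).
  apply: eq_bigr => I /andP[_ jI]; apply: eq_bigr => i iI.
  by rewrite (_ : i == j = false) ?mulr0 ?addr0 //; apply: contraNF jI => /eqP<-.
rewrite big_distrr -big_split /=; apply: eq_bigr => I _.
by rewrite eqxx mulr1 bump_off mulrDl.
Qed.

Lemma pminor_sum_diag p s (d : 'I_p -> R) :
  pminor_sum s (diag_mx (\row_i d i)) = elem_sym s d.
Proof.
apply: eq_bigr => S _; rewrite /psubmx det_mxsub_diag; last exact: enum_val_inj.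
by rewrite (big_enum_val (fun x => d x)); apply: eq_bigr => i _; rewrite mxE.
Qed.

Lemma pminor_sum_diag_add_delta p s (d : 'I_p -> R) c a b : (1 <= s)%N ->
  pminor_sum s (diag_mx (\row_i d i) + c *: delta_mx a b) =
  elem_sym s d + (a == b)%:R * c * elem_sym s.-1 (remove_at d a).
Proof.
move=> s_gt0; case: (eqVneq a b) => [<-|neq_ab]; last first.
  by rewrite pminor_sum_diag_add_offdiag // pminor_sum_diag !mul0r addr0.
have -> : diag_mx (\row_i d i) + c *: delta_mx a a =
    diag_mx (\row_i (d i + c * (i == a)%:R)).
  apply/matrixP => i j; rewrite !mxE; case: (eqVneq i j) => [<-|neq_ij].
    by rewrite !mulr1n andbb.
  by rewrite (_ : (i == a) && (j == a) = false) ?mulr0 ?addr0 //;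
    apply: contraNF neq_ij => /andP[/eqP-> /eqP->].
by rewrite pminor_sum_diag elem_sym_bump // mul1r.
Qed.

End ElementarySymmetric.

Section VolumeSampling.
Variable R : realFieldType.

Lemma penrose_full_row_rank m n (A : 'M[R]_(m, n)) : A *m A^T \in unitmx ->
  penrose A (A^T *m invmx (A *m A^T)).
Proof.
move=> AAt_unit; split.
- by rewrite mulmxA mulmxV // mul1mx.
- by rewrite -!mulmxA (mulmxA A) mulmxV // mulmx1.
- by rewrite mulmxA mulmxV // trmx1.
- by rewrite !trmx_mul trmxK trmx_inv trmx_mul trmxK mulmxA.
Qed.

(* [P] is the orthogonal projection onto the row space of [A]; [X *m A] is
   an orthogonal projection fixing that row space, so they coincide. *)
Lemma penrose_mulmx_full_row_rank m n (A : 'M[R]_(m, n)) X : penrose A X ->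
  A *m A^T \in unitmx -> X *m A = A^T *m invmx (A *m A^T) *m A.
Proof.
case=> AXA _ _ XA_sym AAt_unit; set P := A^T *m _ *m A.
have P_XA : P *m (X *m A) = P by rewrite /P -!mulmxA (mulmxA A X) AXA.
have XA_P : P *m (X *m A) = X *m A.
  rewrite -{1}XA_sym trmx_mul /P -!mulmxA (mulmxA A A^T) (mulmxA (invmx _)).
  by rewrite mulVmx // mul1mx -trmx_mul XA_sym.
by rewrite -XA_P P_XA.
Qed.

Lemma pinv_mulmx_full_row_rank m n (A : 'M[R]_(m, n)) : A *m A^T \in unitmx ->
  pinv A *m A = A^T *m invmx (A *m A^T) *m A.
Proof.
move=> AAt_unit; apply: penrose_mulmx_full_row_rank => //; rewrite /pinv.
by apply: epsilon_spec; exists (A^T *m invmx (A *m A^T)); exact: penrose_full_row_rank.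
Qed.

(* A left null vector [v] of [B B^T] satisfies [|v B|^2 = 0], hence [v B = 0]. *)
Lemma det_gram_eq0 k n (B : 'M[R]_(k, n)) (M : 'M[R]_n) :
  \det (B *m B^T) = 0 -> \det (B *m M *m B^T) = 0.
Proof.
move/eqP/det0P => [v v_neq0 v_ker]; apply/eqP/det0P; exists v => //.
suff vB0 : v *m B = 0 by rewrite !mulmxA vB0 !mul0mx.
have : (v *m B *m (v *m B)^T) 0 0 = 0.
  by rewrite trmx_mul !mulmxA -(mulmxA v) v_ker mul0mx mxE.
rewrite mxE => /psumr_eq0P sq_eq0.
apply/matrixP => i j; rewrite ord1 [RHS]mxE.
have /eqP : (v *m B) 0 j * (v *m B)^T j 0 = 0.
  by apply: sq_eq0 => // l _; rewrite [X in _ * X]mxE -expr2 sqr_ge0.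
by rewrite [X in _ * X]mxE -expr2 sqrf_eq0 => /eqP.
Qed.

(* The matrix determinant lemma when [B B^T] is invertible; both sides
   vanish otherwise. *)
Lemma det_gram_pinv_form k n (B : 'M[R]_(k, n)) (y z : 'rV[R]_n) :
  (y *m (\det (B *m B^T) *: (pinv B *m B)) *m z^T) 0 0 =
  \det (B *m (1%:M + z^T *m y) *m B^T) - \det (B *m B^T).
Proof.
have [BBt_unit|] := boolP (B *m B^T \in unitmx); last first.
  rewrite unitmxE unitfE negbK => /eqP BBt_det0.
  by rewrite BBt_det0 det_gram_eq0 // subr0 scale0r mulmx0 mul0mx mxE.
rewrite pinv_mulmx_full_row_rank // mulmxDr mulmx1 mulmxDl.
have -> : B *m (z^T *m y) *m B^T = (B *m z^T) *m (y *m B^T) by rewrite !mulmxA.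
rewrite det_add_rank1 // -scalemxAr -scalemxAl mxE mulrDr mulr1 addrAC subrr add0r.
by rewrite !mulmxA.
Qed.

Lemma rows_of_mulmx_tr m n (A B : 'M[R]_(m, n)) (S : {set 'I_m}) :
  rows_of A S *m (rows_of B S)^T = psubmx S (A *m B^T).
Proof. by rewrite /psubmx mxsub_mul /rows_of trmx_mxsub. Qed.

Definition vol_weighted_proj m n s (A : 'M[R]_(m, n)) : 'M[R]_n :=
  \sum_(S : {set 'I_m} | #|S| == s)
     \det (rows_of A S *m (rows_of A S)^T) *: (pinv (rows_of A S) *m rows_of A S).

Lemma vol_expect_projE m n s (A : 'M[R]_(m, n)) :
  vol_expect_proj s A = (pminor_sum s (A *m A^T))^-1 *: vol_weighted_proj s A.
Proof.
rewrite /vol_expect_proj /vol_weighted_proj scaler_sumr; apply: eq_bigr => S _.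
rewrite /vol_prob scalerA mulrC; congr (_ * _ *: _); congr (_^-1).
by apply: eq_bigr => J _; rewrite rows_of_mulmx_tr.
Qed.

Lemma vol_weighted_proj_form m n s (A : 'M[R]_(m, n)) (y z : 'rV[R]_n) :
  (y *m vol_weighted_proj s A *m z^T) 0 0 =
  pminor_sum s (A *m (1%:M + z^T *m y) *m A^T) - pminor_sum s (A *m A^T).
Proof.
rewrite mulmx_sumr mulmx_suml summxE -sumrB; apply: eq_bigr => S _.
by rewrite det_gram_pinv_form /rows_of mul_rowsub_mx -!/(rows_of _ S) !rows_of_mulmx_tr.
Qed.

End VolumeSampling.

Section DiagonalFactor.
Variables (R : realFieldType) (m n : nat) (Sigma : 'M[R]_(m, n)).
Hypothesis Sigma_diag : forall (i : 'I_m) (j : 'I_n), (i : nat) != j -> Sigma i j = 0.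

Let lambda (i : 'I_m) : R := (Sigma *m Sigma^T) i i.

Lemma Sigma_eq0_row (i a : 'I_m) (j : 'I_n) : (a : nat) = j -> i != a -> Sigma i j = 0.
Proof.
by move=> aj neq_ia; apply: Sigma_diag; rewrite -aj; apply: contraNneq neq_ia => /val_inj->.
Qed.

Lemma Sigma_eq0_col (i : 'I_m) (j : 'I_n) : (m <= j)%N -> Sigma i j = 0.
Proof. by move=> le_mj; apply: Sigma_diag; rewrite neq_ltn (leq_trans (ltn_ord i)). Qed.

Lemma Sigma_gram_diag : Sigma *m Sigma^T = diag_mx (\row_i lambda i).
Proof.
apply/matrixP => a b; rewrite [RHS]mxE [in RHS]mxE.
case: (eqVneq a b) => [<-|neq_ab]; first by rewrite mulr1n.
rewrite mulr0n mxE; apply: big1 => l _; rewrite mxE.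
case: (eqVneq (a : nat) l) => [al|/Sigma_diag->]; last by rewrite mul0r.
by rewrite (@Sigma_eq0_row b a l) ?mulr0 // eq_sym.
Qed.

Lemma col_Sigma (j : 'I_n) (a : 'I_m) : (a : nat) = j ->
  col j Sigma = Sigma a j *: delta_mx a 0.
Proof.
move=> aj; apply/matrixP => i z; rewrite !mxE ord1 eqxx andbT.
by case: (eqVneq i a) => [->|neq_ia]; rewrite ?mulr1 // mulr0 (Sigma_eq0_row aj).
Qed.

Lemma pminor_sum_Sigma_rank1 s (j k : 'I_n) : (1 <= s)%N ->
  pminor_sum s (Sigma *m Sigma^T + col k Sigma *m (col j Sigma)^T) -
    pminor_sum s (Sigma *m Sigma^T) =
  (Sigma^T *m diag_mx (\row_i elem_sym s.-1 (remove_at lambda i)) *m Sigma) j k.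
Proof.
move=> s_gt0; rewrite mul_mx_diag mxE.
under [RHS]eq_bigr do rewrite !mxE.
have [le_mj|lt_jm] := leqP m j.
  have -> : col j Sigma = 0 by apply/matrixP => i z; rewrite !mxE Sigma_eq0_col.
  rewrite trmx0 mulmx0 addr0 subrr; symmetry.
  by apply: big1 => i _; rewrite Sigma_eq0_col ?mul0r.
have [le_mk|lt_km] := leqP m k.
  have -> : col k Sigma = 0 by apply/matrixP => i z; rewrite !mxE Sigma_eq0_col.
  rewrite mul0mx addr0 subrr; symmetry.
  by apply: big1 => i _; rewrite (Sigma_eq0_col _ le_mk) mulr0.
pose a := Ordinal lt_jm; pose b := Ordinal lt_km.
rewrite (@col_Sigma j a) // (@col_Sigma k b) // linearZ /= trmx_delta -scalemxAl -scalemxAr.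
rewrite scalerA mul_delta_mx Sigma_gram_diag pminor_sum_diag_add_delta //.
rewrite pminor_sum_diag addrAC subrr add0r (bigD1 a) //= big1 ?addr0; last first.
  by move=> i neq_ia; rewrite (@Sigma_eq0_row i a j) // !mul0r.
case: (eqVneq b a) => [eq_ba|neq_ba].
  by rewrite eq_ba mul1r [Sigma a k * _]mulrC mulrAC.
by rewrite !mul0r (@Sigma_eq0_row a b k) 1?eq_sym ?mulr0.
Qed.

End DiagonalFactor.

Section SingularValueDecomposition.
Variables (R : realFieldType) (m n : nat) (A : 'M[R]_(m, n)).
Variables (U : 'M[R]_m) (Sigma : 'M[R]_(m, n)) (V : 'M[R]_n).
Hypotheses (HU : U^T *m U = 1%:M) (HV : V^T *m V = 1%:M).
Hypothesis Sigma_diag : forall (i : 'I_m) (j : 'I_n), (i : nat) != j -> Sigma i j = 0.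
Hypothesis HA : A = U *m Sigma *m V^T.

Let lambda (i : 'I_m) : R := (Sigma *m Sigma^T) i i.

Lemma pminor_sum_svd s (M : 'M[R]_n) :
  pminor_sum s (A *m M *m A^T) = pminor_sum s (Sigma *m (V^T *m M *m V) *m Sigma^T).
Proof.
have -> : A *m M *m A^T = U *m (Sigma *m (V^T *m M *m V) *m Sigma^T) *m U^T.
  by rewrite HA !trmx_mul !trmxK !mulmxA.
exact: pminor_sum_conj.
Qed.

Lemma pminor_sum_gram_svd s : pminor_sum s (A *m A^T) = pminor_sum s (Sigma *m Sigma^T).
Proof. by rewrite -[A^T]mul1mx mulmxA pminor_sum_svd mulmx1 HV mulmx1. Qed.

Lemma vol_weighted_proj_svd s : (1 <= s)%N ->
  vol_weighted_proj s A =
  A^T *m (U *m diag_mx (\row_i elem_sym s.-1 (remove_at lambda i)) *m U^T) *m A.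
Proof.
move=> s_gt0; set D := diag_mx _.
have VVt : V *m V^T = 1%:M by apply: mulmx1C.
have conjV (X : 'M[R]_n) : X = V *m (V^T *m X *m V) *m V^T.
  by rewrite !mulmxA VVt mul1mx -mulmxA VVt mulmx1.
rewrite [LHS]conjV [RHS]conjV; congr (_ *m _ *m _); apply/matrixP => j k.
have -> : V^T *m (A^T *m (U *m D *m U^T) *m A) *m V = Sigma^T *m D *m Sigma.
  rewrite HA !trmx_mul !trmxK !mulmxA HV mul1mx -(mulmxA _ U^T U) HU mulmx1.
  by rewrite -(mulmxA _ U^T U) HU mulmx1 -(mulmxA _ V^T V) HV mulmx1.
rewrite -pminor_sum_Sigma_rank1 //.
pose y : 'rV_n := delta_mx 0 j *m V^T; pose z : 'rV_n := delta_mx 0 k *m V^T.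
have -> : (V^T *m vol_weighted_proj s A *m V) j k = (y *m vol_weighted_proj s A *m z^T) 0 0.
  have entry (M : 'M[R]_n) :
      M j k = ((delta_mx 0 j : 'rV_n) *m M *m (delta_mx k 0 : 'cV_n)) 0 0.
    by rewrite -rowE -colE !mxE.
  by rewrite /y /z trmx_mul trmx_delta trmxK [LHS]entry !mulmxA.
rewrite vol_weighted_proj_form pminor_sum_svd pminor_sum_gram_svd.
congr (pminor_sum s _ - _).
rewrite /y /z trmx_mul trmx_delta trmxK mulmxDr mulmxDl mulmx1 HV !mulmxA HV mul1mx.
rewrite -(mulmxA _ V^T V) HV mulmx1 mulmxDr mulmxDl mulmx1 !colE trmx_mul trmx_delta.
by rewrite !mulmxA.
Qed.

End SingularValueDecomposition.

Unset Implicit Arguments.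

Theorem lemma2p1 (R : realFieldType) (m n : nat) (A : 'M[R]_(m, n))
  (U : 'M[R]_m) (Sigma : 'M[R]_(m, n)) (V : 'M[R]_n)
  (HU : U^T *m U = 1%:M) (HV : V^T *m V = 1%:M)
  (Hdiag : forall (i : 'I_m) (j : 'I_n), (i : nat) != j -> Sigma i j = 0)
  (Hnneg : forall (i : 'I_m) (j : 'I_n), 0 <= Sigma i j)
  (Hsorted : forall (i1 i2 : 'I_m) (j1 j2 : 'I_n),
      (i1 : nat) = j1 -> (i2 : nat) = j2 -> (i1 <= i2)%N -> Sigma i2 j2 <= Sigma i1 j1)
  (HA : A = U *m Sigma *m V^T)
  (s : nat) (Hs1 : (1 <= s)%N) (Hsr : (s <= \rank A)%N) :
  let lambda : 'I_m -> R := fun i => (Sigma *m Sigma^T) i i in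
  let H_s : 'M[R]_m :=
    (elem_sym s lambda)^-1 *:
      (U *m diag_mx (\row_(i < m) elem_sym s.-1 (remove_at lambda i)) *m U^T) in
  vol_expect_proj s A = A^T *m H_s *m A.
Proof.
move=> lambda H_s.
rewrite vol_expect_projE (pminor_sum_gram_svd HU HV HA) (Sigma_gram_diag Hdiag).
rewrite pminor_sum_diag (vol_weighted_proj_svd HU HV Hdiag HA Hs1).
by rewrite /H_s -scalemxAr -scalemxAl.
Qed.
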